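(* Consider a trajectory of the no-slip billiard in a solid cylinder $\mathcal{B}\subset\mathbb{R}^n$ with axis vector $e$, under no forces, that is transversely periodic of period $2$ (its projection to the transverse billiard in $e^\perp$ is periodic of period $2$, so the collision normals alternate between two values and all intercollision times are equal; this common time is set to $1$, and $h_0=0$). Define $Q=\mathcal{A}_1\mathcal{A}_2$, $\mathcal{A}=\mathcal{A}_1$, and the row vector $\xi=(1+c,\,-s\nu_1^\dagger)$. Then $Q\in SO(n)$. Let $P$ be the orthogonal projection onto the eigenspace of $Q$ for the eigenvalue $1$. Then $$h_\ell=\hat h_\ell+\Big\lfloor\frac{\ell}{2}\Big\rfloor\xi P\Lambda_0,$$ where $(\hat h_\ell)$ is a bounded sequence. Consequently $\lim_{\ell\to\infty}h_\ell/\ell=\frac12\xi P\Lambda_0$. In particular, if $1$ is not in the spectrum of $Q$, the orbit is bounded; if $\xi$ is not orthogonal to the eigenspace of $Q$ for the eigenvalue $1$, then for generic initial conditions the orbit is not bounded.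
   Context: The particle is a ball of radius $r>0$ with rotationally symmetric mass distribution of total mass $m$ and second-moment matrix per unit mass $\lambda I$, $\lambda=(r\gamma)^2/2$, $\gamma>0$; $c=\frac{1-\gamma^2}{1+\gamma^2}$, $s=\frac{2\gamma}{1+\gamma^2}$; $(a\wedge b)x=(a\cdot x)b-(b\cdot x)a$. The solid cylinder is $\mathcal{B}=\overline{\mathcal{B}}\times\mathbb{R}e$ with $\overline{\mathcal{B}}\subset W:=e^\perp$ (the set of admissible centers); $\nu_a\in W$ is the inward unit normal at a regular boundary point $a$. A state is $(a,u,U)$, $u$ the center-of-mass velocity, $U\in\mathfrak{so}(n)$ the angular velocity matrix. Between collisions $U$ is constant and the center of mass moves freely; at a collision at $a$ the pre-collision $(u,U)$ is replaced by $C_a(u,U)=\big(cu-\tfrac{s}{\gamma}(u\cdot\nu_a)\nu_a+s\gamma rU\nu_a,\ \tfrac{s}{\gamma r}\nu_a\wedge u+U-\tfrac{s}{\gamma}\nu_a\wedge U\nu_a\big)$. For the $j$th collision at $a_j$ ($j=0,1,\dots$), $\nu_j=\nu_{a_j}$, $(u_j,U_j)$ are the post-collision velocities, $h_j=a_j\cdot e$, $\sigma_j=u_j\cdot e$, $w_j=\gamma rU_je$, $\Lambda_j=(\sigma_j,w_j)\in\mathbb{R}\oplus W\cong\mathbb{R}^n$. For a boundary point $a$ let $\Pi_a$ be the orthogonal projection onto $\{w\in W:w\cdot\nu_a=0\}$ and $\mathcal{A}(a)$ the linear map of $\mathbb{R}\oplus W$ with block matrix $\begin{pmatrix}c&-s\nu_a^\dagger\\-s\nu_a&-c\nu_a\nu_a^\dagger+\Pi_a\end{pmatrix}$;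 $\mathcal{A}_i=\mathcal{A}(a_i)$. *)

From mathcomp Require Import all_boot all_order all_algebra.
From mathcomp Require Import all_classical all_reals all_analysis.
Set Implicit Arguments. Unset Strict Implicit. Unset Printing Implicit Defensive.
Import Order.TTheory GRing.Theory Num.Theory.
Local Open Scope ring_scope.

Definition dotv (R : realType) (n : nat) (x y : 'cV[R]_n) : R := (x^T *m y) 0 0.

Definition wedge (R : realType) (n : nat) (a b : 'cV[R]_n) : 'M[R]_n :=
  b *m a^T - a *m b^T.

Definition cpar (R : realType) (gamma : R) : R := (1 - gamma ^+ 2) / (1 + gamma ^+ 2).
Definition spar (R : realType) (gamma : R) : R := (2 * gamma) / (1 + gamma ^+ 2).

(* The collision map C_a, where nu = nu_a is the normal at the collision point. *)
Definition collision (R : realType) (n : nat) (gamma r : R) (nu : 'cV[R]_n)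
    (uU : 'cV[R]_n * 'M[R]_n) : 'cV[R]_n * 'M[R]_n :=
  let: (u, U) := uU in
  let c := cpar gamma in let s := spar gamma in
  (c *: u - ((s / gamma) * dotv u nu) *: nu + (s * gamma * r) *: (U *m nu),
   (s / (gamma * r)) *: wedge nu u + U - (s / gamma) *: wedge nu (U *m nu)).

(* Identification R (+) W ~ R^n, (sigma, w) |-> sigma e + w  (W = e^perp). *)
Definition iota (R : realType) (n : nat) (e : 'cV[R]_n) (sigma : R) (w : 'cV[R]_n)
  : 'cV[R]_n := sigma *: e + w.

Definition Lambda (R : realType) (n : nat) (gamma r : R) (e u : 'cV[R]_n)
    (U : 'M[R]_n) : 'cV[R]_n :=
  iota e (dotv u e) ((gamma * r) *: (U *m e)).

(* Pi_a : orthogonal projection onto {w in W | w.nu = 0}, extended by 0 on R e. *)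
Definition PiW (R : realType) (n : nat) (e nu : 'cV[R]_n) : 'M[R]_n :=
  1%:M - e *m e^T - nu *m nu^T.

(* The map A(a) of R (+) W with block matrix
     ( c        -s nu^T            )
     ( -s nu    -c nu nu^T + Pi_a  ),
   transported to R^n via iota (the four terms are the four blocks). *)
Definition Acal (R : realType) (n : nat) (gamma : R) (e nu : 'cV[R]_n) : 'M[R]_n :=
  let c := cpar gamma in let s := spar gamma in
  c *: (e *m e^T) - s *: (e *m nu^T) - s *: (nu *m e^T)
  + (- c *: (nu *m nu^T) + PiW e nu).

Definition transverse (R : realType) (n : nat) (e x : 'cV[R]_n) : 'cV[R]_n :=
  x - dotv x e *: e.

Definition is_orth_proj (R : realType) (n : nat) (P : 'M[R]_n) (S : 'cV[R]_n -> Prop)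
  : Prop :=
  P^T = P /\ P *m P = P /\ (forall v, S v <-> P *m v = v).

(* Each collision acts on Lambda = (sigma, w) by A(a), the Householder reflection
   in the hyperplane orthogonal to gamma e + nu_a; hence along a transversely
   2-periodic orbit Lambda_(2m) = Q'^m Lambda_0 with Q' = A_2 A_1 = Q^T orthogonal.
   A flight raises the height by e . Lambda_j, so two flights raise it by
   xi Lambda_(2m).  Since the range of 1 - Q' is the orthogonal complement of the
   fixed space of Q', one can write Lambda_0 = P Lambda_0 + (y - Q' y); the sum
   then telescopes to h_(2m) = m xi P Lambda_0 + xi y - xi Q'^m y, and the last
   two terms are bounded because Q' preserves lengths. *)

From Pilot Require Import Defs.
From mathcomp Require Import all_boot all_order all_algebra.
From mathcomp Require Import all_classical all_reals all_analysis.
From mathcomp Require Import ring lra.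
Import Order.TTheory GRing.Theory Num.Theory.
Import numFieldNormedType.Exports.
Set Implicit Arguments. Unset Strict Implicit. Unset Printing Implicit Defensive.
Local Open Scope classical_set_scope.
Local Open Scope ring_scope.

Section InnerProduct.
Variables (R : realType) (n : nat).
Implicit Types (x y z : 'cV[R]_n) (A : 'M[R]_n).

Lemma dotvC x y : dotv x y = dotv y x.
Proof. by rewrite /dotv !mxE; apply: eq_bigr => i _; rewrite !mxE mulrC. Qed.

Lemma dotvDr x y z : dotv x (y + z) = dotv x y + dotv x z.
Proof. by rewrite /dotv mulmxDr mxE. Qed.

Lemma dotvZr k x y : dotv x (k *: y) = k * dotv x y.
Proof. by rewrite /dotv -scalemxAr mxE. Qed.

Lemma dotvNr x y : dotv x (- y) = - dotv x y.
Proof. by rewrite /dotv mulmxN mxE. Qed.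

Lemma dotvBr x y z : dotv x (y - z) = dotv x y - dotv x z.
Proof. by rewrite dotvDr dotvNr. Qed.

Lemma dotv0r x : dotv x 0 = 0.
Proof. by rewrite /dotv mulmx0 mxE. Qed.

Lemma dotvDl x y z : dotv (y + z) x = dotv y x + dotv z x.
Proof. by rewrite !(dotvC _ x) dotvDr. Qed.

Lemma dotvZl k x y : dotv (k *: y) x = k * dotv y x.
Proof. by rewrite !(dotvC _ x) dotvZr. Qed.

Lemma dotvNl x y : dotv (- y) x = - dotv y x.
Proof. by rewrite !(dotvC _ x) dotvNr. Qed.

Lemma dotvBl x y z : dotv (y - z) x = dotv y x - dotv z x.
Proof. by rewrite !(dotvC _ x) dotvBr. Qed.

Definition dotvE := (dotvDl, dotvDr, dotvBl, dotvBr, dotvZl, dotvZr, dotvNl, dotvNr).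

Lemma dotvv_ge0 x : 0 <= dotv x x.
Proof.
by rewrite /dotv mxE sumr_ge0 // => i _; rewrite mxE -expr2 sqr_ge0.
Qed.

Lemma norm_dotv_le x y : `|dotv x y| <= (dotv x x + dotv y y) / 2.
Proof.
have := dotvv_ge0 (x - y); have := dotvv_ge0 (x + y).
rewrite !dotvE (dotvC y x) ler_norml => ? ?; apply/andP; split; lra.
Qed.

Lemma dotv_mulmxl A x y : dotv (A *m x) y = dotv x (A^T *m y).
Proof. by rewrite /dotv trmx_mul mulmxA. Qed.

Lemma dotv_skew A x : A^T = - A -> dotv x (A *m x) = 0.
Proof.
move=> skA; have : dotv x (A *m x) = - dotv x (A *m x).
  by rewrite -{1}(trmxK A) -dotv_mulmxl skA mulNmx dotvNl dotvC.
by move/eqP; rewrite -addr_eq0 -mulr2n mulrn_eq0 => /eqP.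
Qed.

Lemma dotv_skew_swap A x y : A^T = - A -> dotv x (A *m y) = - dotv (A *m x) y.
Proof. by move=> skA; rewrite -{1}(trmxK A) -dotv_mulmxl skA mulNmx dotvNl. Qed.

Lemma mulmx_outer x y z : (x *m y^T) *m z = dotv y z *: x.
Proof. by rewrite -mulmxA [y^T *m z]mx11_scalar mul_mx_scalar. Qed.

Lemma wedge_mul x y z : wedge x y *m z = dotv x z *: y - dotv y z *: x.
Proof. by rewrite /wedge mulmxBl !mulmx_outer. Qed.

Lemma orthomx_dotv A x : A^T *m A = 1%:M -> dotv (A *m x) (A *m x) = dotv x x.
Proof. by move=> oA; rewrite dotv_mulmxl mulmxA oA mul1mx. Qed.

Lemma orthomx_iter_dotv A m x :
  A^T *m A = 1%:M -> dotv (iter m (mulmx A) x) (iter m (mulmx A) x) = dotv x x.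
Proof. by move=> oA; elim: m => //= m IHm; rewrite orthomx_dotv. Qed.

Lemma dotv_transverse e x :
  dotv e e = 1 -> dotv x x = dotv (transverse e x) (transverse e x) + dotv x e ^+ 2.
Proof.
move=> e_unit; rewrite /transverse !dotvE e_unit (dotvC e x); ring.
Qed.

End InnerProduct.

Lemma det_1_add_outer (R : comUnitRingType) n (x y : 'cV[R]_n) :
  \det (1%:M + x *m y^T) = 1 + (y^T *m x) 0 0.
Proof.
(* Factor the bordered matrix [1, -x; y^T, 1] in two block-triangular ways. *)
pose M := block_mx 1%:M (- x) y^T (1%:M : 'M[R]_1).
have M_lower : M = block_mx 1%:M 0 y^T 1%:M *m block_mx 1%:M (- x) 0 (1%:M + y^T *m x).
  rewrite mulmx_block !(mul1mx, mulmx1, mul0mx, mulmx0, addr0, add0r) mulmxN.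
  by rewrite [1%:M + _]addrC addKr.
have M_upper : M = block_mx 1%:M (- x) 0 1%:M *m block_mx (1%:M + x *m y^T) 0 y^T 1%:M.
  by rewrite mulmx_block !(mul1mx, mulmx1, mul0mx, mulmx0, addr0, add0r) mulNmx addrK.
have := congr1 determinant M_upper; rewrite {1}M_lower !det_mulmx.
by rewrite !det_lblock !det_ublock !det1 !mul1r mulr1 det_mx11 !mxE eqxx mulr1n => <-.
Qed.

Section Householder.
Variables (R : realType) (n : nat) (w : 'cV[R]_n).

Definition householder : 'M[R]_n := 1%:M - (2 / dotv w w) *: (w *m w^T).

Lemma householder_mul x : householder *m x = x - (2 / dotv w w * dotv w x) *: w.
Proof. by rewrite mulmxBl mul1mx -scalemxAl mulmx_outer scalerA. Qed.

Lemma householder_sym : householder^T = householder.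
Proof. by rewrite /householder linearB /= trmx1 linearZ /= trmx_mul trmxK. Qed.

Hypothesis w_neq0 : dotv w w != 0.

Lemma householder_invol : householder *m householder = 1%:M.
Proof.
have WW : (w *m w^T) *m (w *m w^T) = dotv w w *: (w *m w^T).
  by rewrite mulmxA mulmx_outer scalemxAl.
rewrite /householder mulmxBr mulmx1 !mulmxBl mul1mx -!scalemxAl -scalemxAr WW.
move: (w *m w^T) => W.
by apply/matrixP => i j; rewrite !mxE; field.
Qed.

Lemma det_householder : \det householder = -1.
Proof.
rewrite /householder scalemxAl -mulNmx -scaleNr det_1_add_outer.
by rewrite -scalemxAr mxE -[(w^T *m w) 0 0]/(dotv w w); field.
Qed.

End Householder.

Section CollisionMap.
Variables (R : realType) (n : nat) (gamma : R) (e nu : 'cV[R]_n).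
Hypotheses (e_unit : dotv e e = 1) (nu_unit : dotv nu nu = 1) (nu_perp_e : dotv nu e = 0).

Let w := gamma *: e + nu.

Lemma dotv_normal_axis : dotv w w = 1 + gamma ^+ 2.
Proof. by rewrite /w !dotvE e_unit nu_unit nu_perp_e dotvC nu_perp_e; ring. Qed.

Lemma Acal_householder : Acal gamma e nu = householder w.
Proof.
have g2_neq0 : 1 + gamma ^+ 2 != 0 by rewrite gt_eqF // ltr_pwDl // sqr_ge0.
rewrite /Acal /PiW /cpar /spar /householder dotv_normal_axis /w.
have -> : (gamma *: e + nu)^T = gamma *: e^T + nu^T by apply/matrixP => i j; rewrite !mxE.
rewrite mulmxDl !mulmxDr -!scalemxAl -!scalemxAr.
move: (e *m e^T) (e *m nu^T) (nu *m e^T) (nu *m nu^T) => E X Y N.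
by apply/matrixP => i j; rewrite !mxE; field.
Qed.

Lemma normal_axis_neq0 : dotv w w != 0.
Proof. by rewrite dotv_normal_axis gt_eqF // ltr_pwDl // sqr_ge0. Qed.

Lemma Acal_sym : (Acal gamma e nu)^T = Acal gamma e nu.
Proof. by rewrite Acal_householder householder_sym. Qed.

Lemma Acal_invol : Acal gamma e nu *m Acal gamma e nu = 1%:M.
Proof. by rewrite Acal_householder householder_invol // normal_axis_neq0. Qed.

Lemma det_Acal : \det (Acal gamma e nu) = -1.
Proof. by rewrite Acal_householder det_householder // normal_axis_neq0. Qed.

Lemma dotv_axis_Acal v :
  dotv e v + dotv e (Acal gamma e nu *m v) =
  dotv ((1 + cpar gamma) *: e - spar gamma *: nu) v.
Proof.
have g2_neq0 : 1 + gamma ^+ 2 != 0 by rewrite gt_eqF // ltr_pwDl // sqr_ge0.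
rewrite [dotv e (_ *m _)]dotvC dotv_mulmxl Acal_sym Acal_householder householder_mul.
by rewrite dotv_normal_axis /w !dotvE e_unit nu_perp_e /cpar /spar !(dotvC v); field.
Qed.

Lemma Lambda_collision (r : R) (u : 'cV[R]_n) (U : 'M[R]_n) :
  0 < gamma -> 0 < r -> U^T = - U ->
  let uU' := collision gamma r nu (u, U) in
  Lambda gamma r e uU'.1 uU'.2 = Acal gamma e nu *m Lambda gamma r e u U.
Proof.
move=> gamma_gt0 r_gt0 skU /=.
have g2_neq0 : 1 + gamma ^+ 2 != 0 by rewrite gt_eqF // ltr_pwDl // sqr_ge0.
have gamma_neq0 : gamma != 0 by rewrite gt_eqF.
have r_neq0 : r != 0 by rewrite gt_eqF.
rewrite Acal_householder householder_mul dotv_normal_axis /w /Lambda /Defs.iota.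
rewrite !(mulmxDl, mulmxBl, mulNmx) -!scalemxAl !wedge_mul !dotvE.
rewrite e_unit nu_perp_e (dotv_skew _ skU) (dotv_skew_swap nu e skU).
by apply/matrixP => i j; rewrite !mxE /cpar /spar; field; apply/and3P.
Qed.

End CollisionMap.

Lemma eq_mulmx_cV (F : fieldType) n (A B : 'M[F]_n) :
  (forall v : 'cV[F]_n, A *m v = B *m v) -> A = B.
Proof.
move=> eqAB; apply: trmx_inj; apply/eqP/mulmxP => u.
by apply: trmx_inj; rewrite !trmx_mul !trmxK eqAB.
Qed.

Lemma unitmx_cV_inj (F : fieldType) n (A : 'M[F]_n) :
  (forall v : 'cV[F]_n, A *m v = 0 -> v = 0) -> A \in unitmx.
Proof.
move=> injA; rewrite -unitmx_tr unitmxE unitfE; apply/negP => /det0P [u u_neq0 uA0].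
have /injA : A *m u^T = 0 by rewrite -[A]trmxK -trmx_mul uA0 trmx0.
by move/(congr1 trmx); rewrite trmxK trmx0 => u0; rewrite u0 eqxx in u_neq0.
Qed.

Lemma orthomx_trmx (R : realType) n (Q : 'M[R]_n) :
  Q^T *m Q = 1%:M -> Q^T^T *m Q^T = 1%:M.
Proof. by rewrite trmxK => /mulmx1C. Qed.

Lemma is_orth_proj_fix_trmx (R : realType) n (Q P : 'M[R]_n) :
  Q^T *m Q = 1%:M -> is_orth_proj P (fun v => Q *m v = v) ->
  is_orth_proj P (fun v => Q^T *m v = v).
Proof.
move=> Q_orth [PT [PP P_fix]]; split=> //; split=> // v; rewrite -P_fix.
have QQT := orthomx_trmx Q_orth; rewrite trmxK in QQT.
by split=> fixv; rewrite -{1}fixv mulmxA ?QQT ?Q_orth mul1mx.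
Qed.

Section FixedSpaceProjection.
Variables (R : realType) (n : nat) (Q P : 'M[R]_n).
Hypotheses (Q_orth : Q^T *m Q = 1%:M) (P_proj : is_orth_proj P (fun v => Q *m v = v)).

Lemma mulmx_fixproj : Q *m P = P.
Proof.
have [_ [PP P_fix]] := P_proj.
by apply: eq_mulmx_cV => v; rewrite -mulmxA; apply/P_fix; rewrite mulmxA PP.
Qed.

Lemma fixproj_mulmx : P *m Q = P.
Proof.
have [PT _] := P_proj.
have QTP : Q^T *m P = P by rewrite -{1}mulmx_fixproj mulmxA Q_orth mul1mx.
by move/(congr1 trmx): QTP; rewrite trmx_mul trmxK PT.
Qed.

Lemma fixproj_coboundary (z : 'cV[R]_n) :
  exists y : 'cV[R]_n, z = P *m z + (y - Q *m y).
Proof.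
have [_ [PP P_fix]] := P_proj.
(* 1 - Q + P is invertible: a vector of its kernel lies in ker P and is fixed by Q. *)
pose M := 1%:M - Q + P.
have PM : P *m M = P by rewrite /M mulmxDr mulmxBr mulmx1 fixproj_mulmx PP subrr add0r.
have M_unit : M \in unitmx.
  apply: unitmx_cV_inj => v Mv0.
  have Pv0 : P *m v = 0 by rewrite -PM -mulmxA Mv0 mulmx0.
  move: Mv0; rewrite /M mulmxDl Pv0 addr0 mulmxBl mul1mx => /eqP.
  by rewrite subr_eq0 eq_sym => /eqP /P_fix <-.
have PMi : P *m invmx M = P by rewrite -{1}PM -mulmxA mulmxV // mulmx1.
exists (invmx M *m (z - P *m z)).
have -> : forall y : 'cV[R]_n, y - Q *m y = M *m y - P *m y.
  by move=> y; rewrite /M mulmxDl mulmxBl mul1mx addrK.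
by rewrite mulmxA mulmxV // mul1mx mulmxA PMi mulmxBr mulmxA PP subrr subr0 addrC subrK.
Qed.

Lemma iter_fixproj (z : 'cV[R]_n) :
  exists y : 'cV[R]_n, forall m,
    iter m (mulmx Q) z = P *m z + (iter m (mulmx Q) y - iter m.+1 (mulmx Q) y).
Proof.
have [y z_eq] := fixproj_coboundary z; exists y.
by elim=> [|m IHm] //=; rewrite {1}IHm mulmxDr mulmxA mulmx_fixproj mulmxBr.
Qed.

End FixedSpaceProjection.

Section LinearDrift.
Variables (R : realType) (h : nat -> R) (k M : R).
Hypothesis drift : forall l, `|h l - (l./2)%:R * k| <= M.

Lemma drift_ratio_dist l : (0 < l)%N ->
  `|h l / l%:R - k / 2| <= 2 * (M + `|k|) * harmonic l.
Proof.
move=> l_gt0; rewrite /harmonic /= -[l.+1%:R]natr1.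
have x_gt0 : 0 < l%:R :> R by rewrite ltr0n.
have x_ge1 : 1 <= l%:R :> R by rewrite ler1n.
have o_ge0 : 0 <= (odd l)%:R :> R := ler0n _ _.
have o_le1 : (odd l)%:R <= 1 :> R by case: (odd l).
have l_split : l%:R = 2 * (l./2)%:R + (odd l)%:R :> R.
  by rewrite -[in LHS](odd_double_half l) natrD -muln2 natrM addrC mulrC.
have C_ge0 : 0 <= M + `|k| by rewrite addr_ge0 // (le_trans _ (drift l)).
have := drift l; rewrite ler_norml => /andP[d_ge d_le].
have := lexx `|k|; rewrite ler_norml => /andP[k_ge k_le].
set d := h l - _ in d_ge d_le.
have -> : h l / l%:R - k / 2 = (d - (odd l)%:R * k / 2) / l%:R.
  by rewrite /d l_split; field; rewrite -l_split gt_eqF.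
rewrite normrM normfV normr_nat.
apply: (@le_trans _ _ ((M + `|k|) / l%:R)).
  have k_ge0 := normr_ge0 k.
  by rewrite ler_pM2r ?invr_gt0 // ler_norml; apply/andP; split; nra.
by rewrite ler_pdivrMr // mulrAC ler_pdivlMr ?ltr_wpDr //; nra.
Qed.

Lemma cvg_drift_ratio : h l / l%:R @[l --> \oo] --> k / 2.
Proof.
pose C := 2 * (M + `|k|).
have C_harmonic : C * harmonic l @[l --> \oo] --> 0.
  by rewrite -(mulr0 C); apply: cvgM; [exact: cvg_cst | exact: cvg_harmonic].
apply: (@squeeze_cvgr _ _ _ _
  (fun l => k / 2 - C * harmonic l) (fun l => k / 2 + C * harmonic l)).
- near=> l; rewrite -ler_distl; apply: drift_ratio_dist.
  by near: l; exists 1%N.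
- by rewrite -[X in _ --> X]subr0; apply: cvgB => //; exact: cvg_cst.
- by rewrite -[X in _ --> X]addr0; apply: cvgD => //; exact: cvg_cst.
Unshelve. all: by end_near.
Qed.

Lemma drift_unbounded : k != 0 -> ~ exists B, forall l, `|h l| <= B.
Proof.
move=> k_neq0 [B h_le].
have k_gt0 : 0 < `|k| by rewrite normr_gt0.
have m_le m : m%:R * `|k| <= B + M.
  have := drift m.*2; rewrite doubleK => dev.
  rewrite -normr_nat -normrM.
  have -> : m%:R * k = h m.*2 - (h m.*2 - m%:R * k) by rewrite opprB addrC subrK.
  exact: le_trans (ler_normB _ _) (lerD (h_le _) dev).
have C_ge0 : 0 <= (B + M) / `|k| by rewrite divr_ge0 // (le_trans _ (m_le 0%N)) // mul0r.
by have := archi_boundP C_ge0; rewrite ltr_pdivrMr // ltNge m_le.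
Qed.

End LinearDrift.

Record period2_orbit (R : realType) (n : nat) (gamma r : R) (e : 'cV[R]_n)
    (nu : 'cV[R]_n -> 'cV[R]_n) (a u : nat -> 'cV[R]_n) (U : nat -> 'M[R]_n)
  : Prop := Period2Orbit {
  gamma_gt0 : 0 < gamma;
  radius_gt0 : 0 < r;
  axis_unit : dotv e e = 1;
  normal_unit : forall x, dotv (nu x) (nu x) = 1;
  normal_perp_axis : forall x, dotv (nu x) e = 0;
  normal_axial : forall x t, nu (x + t *: e) = nu x;
  spin_skew : forall j, (U j)^T = - U j;
  free_flight : forall j, a j.+1 = a j + u j;
  collision_law : forall j, (u j.+1, U j.+1) = collision gamma r (nu (a j.+1)) (u j, U j);
  height0 : dotv (a 0) e = 0;
  transverse_period2 : forall j, transverse e (a j.+2) = transverse e (a j)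
}.

Section Period2Orbit.
Variables (R : realType) (n : nat) (gamma r : R) (e : 'cV[R]_n).
Variables (nu : 'cV[R]_n -> 'cV[R]_n) (a u : nat -> 'cV[R]_n) (U : nat -> 'M[R]_n).
Hypothesis orbit : period2_orbit gamma r e nu a u U.

Local Notation h l := (dotv (a l) e).
Local Notation Lam j := (Lambda gamma r e (u j) (U j)).
Local Notation A j := (Acal gamma e (nu (a j))).
Local Notation xi_col := ((1 + cpar gamma) *: e - spar gamma *: nu (a 1)).

Let e_unit := axis_unit orbit.
Let nu_unit x := normal_unit orbit x.
Let nu_perp_e x := normal_perp_axis orbit x.

Lemma Acal_orbit_sym j : (A j)^T = A j.
Proof. exact: Acal_sym. Qed.

Lemma Acal_orbit_invol j : A j *m A j = 1%:M.
Proof. exact: Acal_invol. Qed.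

Lemma Lambda_succ j : Lam j.+1 = A j.+1 *m Lam j.
Proof.
have := Lambda_collision e_unit (nu_unit (a j.+1)) (nu_perp_e _) (u j)
  (gamma_gt0 orbit) (radius_gt0 orbit) (spin_skew orbit j).
by rewrite -(collision_law orbit j).
Qed.

Lemma transverse_periodic m j : transverse e (a (m.*2 + j)) = transverse e (a j).
Proof.
by elim: m => //= m IHm; rewrite doubleS !addSn (transverse_period2 orbit) IHm.
Qed.

Lemma normal_periodic m j : nu (a (m.*2 + j)) = nu (a j).
Proof.
have nu_transverse x : nu x = nu (transverse e x).
  by rewrite /transverse -{1}(subrK (dotv x e *: e) x) (normal_axial orbit).
by rewrite nu_transverse transverse_periodic -nu_transverse.
Qed.

Lemma Lambda_double m : Lam m.*2 = iter m (mulmx (A 2 *m A 1)) (Lam 0).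
Proof.
elim: m => //= m <-; rewrite doubleS !Lambda_succ mulmxA.
by rewrite -[m.*2.+2]addn2 -[m.*2.+1]addn1 !normal_periodic.
Qed.

Lemma height_succ j : h j.+1 = h j + dotv e (Lam j).
Proof.
rewrite (free_flight orbit) dotvDl /Lambda /Defs.iota !dotvE e_unit.
by rewrite (dotv_skew _ (spin_skew orbit j)) mulr0 addr0 mulr1.
Qed.

Lemma height_double_succ m : h m.*2.+2 = h m.*2 + dotv xi_col (Lam m.*2).
Proof.
rewrite !height_succ Lambda_succ -[m.*2.+1]addn1 normal_periodic -addrA.
by rewrite dotv_axis_Acal.
Qed.

Lemma Lambda_dotv j : dotv (Lam j) (Lam j) = dotv (Lam 0) (Lam 0).
Proof.
elim: j => // j <-; rewrite Lambda_succ orthomx_dotv //.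
by rewrite Acal_orbit_sym Acal_orbit_invol.
Qed.

Lemma orbit_Q_trmx : (A 1 *m A 2)^T = A 2 *m A 1.
Proof. by rewrite trmx_mul !Acal_orbit_sym. Qed.

Lemma orbit_Q_orthogonal : (A 1 *m A 2)^T *m (A 1 *m A 2) = 1%:M.
Proof.
rewrite orbit_Q_trmx mulmxA -(mulmxA (A 2)) Acal_orbit_invol.
by rewrite mulmx1 Acal_orbit_invol.
Qed.

Lemma orbit_Q_det : \det (A 1 *m A 2) = 1.
Proof. by rewrite det_mulmx !det_Acal // mulN1r opprK. Qed.

Lemma height_bounded :
  (exists M, forall j, dotv (a j) (a j) <= M) -> exists M, forall j, `|h j| <= M.
Proof.
move=> [M a_le]; exists (1 + M) => j.
have := a_le j; rewrite (dotv_transverse _ e_unit) => aj_le.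
have t_ge0 := dotvv_ge0 (transverse e (a j)).
have M_ge0 : 0 <= M := le_trans (dotvv_ge0 _) (a_le 0%N).
rewrite ler_norml; apply/andP; split; nra.
Qed.

Lemma orbit_bounded :
  (exists M, forall j, `|h j| <= M) -> exists M, forall j, dotv (a j) (a j) <= M.
Proof.
move=> [M h_le]; pose T j := dotv (transverse e (a j)) (transverse e (a j)).
exists (T 0%N + T 1%N + M ^+ 2) => j.
have T_le : T j <= T 0%N + T 1%N.
  have := dotvv_ge0 (transverse e (a 0%N)); have := dotvv_ge0 (transverse e (a 1%N)).
  rewrite -(odd_double_half j) addnC /T transverse_periodic.
  by case: (odd j) => /= ? ?; lra.
rewrite (dotv_transverse _ e_unit) -/(T j) -real_normK ?num_real //.
by rewrite lerD // lerXn2r ?nnegrE // (le_trans _ (h_le 0%N)).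
Qed.

Section FixedSpace.
Variable P : 'M[R]_n.
Hypothesis P_proj : is_orth_proj P (fun v => A 1 *m A 2 *m v = v).

Local Notation k := (dotv xi_col (P *m Lam 0)).

Lemma height_double :
  exists y, forall m,
    h m.*2 = m%:R * k + (dotv xi_col y - dotv xi_col (iter m (mulmx (A 2 *m A 1)) y)).
Proof.
have Q_orth := orbit_Q_orthogonal.
have := iter_fixproj (orthomx_trmx Q_orth) (is_orth_proj_fix_trmx Q_orth P_proj) (Lam 0).
rewrite orbit_Q_trmx => -[y iter_eq]; exists y.
elim=> [|m IHm]; first by rewrite (height0 orbit) mul0r subrr addr0.
rewrite doubleS height_double_succ IHm Lambda_double iter_eq !dotvE -natr1.
by rewrite /=; ring.
Qed.

Lemma height_drift : exists M, forall l, `|h l - (l./2)%:R * k| <= M.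
Proof.
have [y h_even] := height_double.
have Q'_orth : (A 2 *m A 1)^T *m (A 2 *m A 1) = 1%:M.
  by rewrite -orbit_Q_trmx orthomx_trmx // orbit_Q_orthogonal.
pose Mv := `|dotv xi_col y| + (dotv xi_col xi_col + dotv y y) / 2.
exists (Mv + (1 + dotv (Lam 0) (Lam 0)) / 2) => l.
have even_le m : `|h m.*2 - m%:R * k| <= Mv.
  rewrite h_even addrC addKr (le_trans (ler_normB _ _)) // lerD2l.
  by rewrite (le_trans (norm_dotv_le _ _)) // orthomx_iter_dotv.
have Lam_le m : `|dotv e (Lam m.*2)| <= (1 + dotv (Lam 0) (Lam 0)) / 2.
  by rewrite (le_trans (norm_dotv_le _ _)) // e_unit Lambda_dotv.
rewrite -(odd_double_half l) half_bit_double; case: (odd l).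
  by rewrite add1n height_succ addrAC (le_trans (ler_normD _ _)) // lerD.
by rewrite add0n (le_trans (even_le _)) // lerDl divr_ge0 // addr_ge0 // dotvv_ge0.
Qed.

End FixedSpace.

End Period2Orbit.

Unset Implicit Arguments.

Theorem theorem5p2 (R : realType) (n : nat) (gamma r : R)
  (e : 'cV[R]_n) (nu : 'cV[R]_n -> 'cV[R]_n)
  (a u : nat -> 'cV[R]_n) (U : nat -> 'M[R]_n) :
  0 < gamma -> 0 < r ->
  dotv e e = 1 ->
  (* normals: unit vectors in W = e^perp, constant along the axis (cylinder) *)
  (forall x, dotv (nu x) (nu x) = 1) ->
  (forall x, dotv (nu x) e = 0) ->
  (forall x t, nu (x + t *: e) = nu x) ->
  (* angular velocities in so(n) *)
  (forall j, (U j)^T = - U j) ->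
  (* free flight between collisions, all intercollision times equal to 1 *)
  (forall j, a j.+1 = a j + u j) ->
  (* post-collision velocities at collision j+1 *)
  (forall j, (u j.+1, U j.+1) = collision gamma r (nu (a j.+1)) (u j, U j)) ->
  (* h_0 = 0 *)
  dotv (a 0) e = 0 ->
  (* transversely periodic of period 2 *)
  (forall j, transverse e (a j.+2) = transverse e (a j)) ->
  let h := fun l => dotv (a l) e in
  let A1 := Acal gamma e (nu (a 1)) in
  let A2 := Acal gamma e (nu (a 2)) in
  let Q := A1 *m A2 in
  let xi : 'rV[R]_n := (1 + cpar gamma) *: e^T - spar gamma *: (nu (a 1))^T in
  let Lambda0 := Lambda gamma r e (u 0) (U 0) in
  (Q^T *m Q = 1%:M /\ \det Q = 1) /\
  forall P : 'M[R]_n, is_orth_proj P (fun v => Q *m v = v) ->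
    let k := (xi *m P *m Lambda0) 0 0 in
    (exists hhat : nat -> R,
        (exists M, forall l, `|hhat l| <= M) /\
        forall l, h l = hhat l + (l./2)%:R * k) /\
    ((fun l : nat => h l / l%:R) @ \oo --> k / 2) /\
    ((forall v : 'cV[R]_n, Q *m v = v -> v = (0 : 'cV[R]_n)) ->
        exists M, forall j, dotv (a j) (a j) <= M) /\
    ((exists v : 'cV[R]_n, Q *m v = v /\ (xi *m v) 0 0 != 0) ->
        xi *m P != (0 : 'rV[R]_n) /\
        (k != 0 -> ~ exists M, forall j, dotv (a j) (a j) <= M)).
Proof.
move=> gamma_gt0 r_gt0 e_unit nu_unit nu_perp_e nu_axial U_skew flight coll h0 tr2.
move=> h A1 A2 Q xi Lambda0.
have orbit : period2_orbit gamma r e nu a u U by split.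
split; first by split; [exact: orbit_Q_orthogonal orbit | exact: orbit_Q_det orbit].
move=> P P_proj k.
have kE : k = dotv ((1 + cpar gamma) *: e - spar gamma *: nu (a 1)) (P *m Lambda0).
  rewrite /k -mulmxA; congr ((_ *m _) 0 0).
  by apply/matrixP => i j; rewrite !mxE.
have [M dev] := height_drift orbit P_proj; rewrite -kE in dev.
have QP : Q *m P = P := mulmx_fixproj P_proj.
split.
  by exists (fun l => h l - (l./2)%:R * k); split; [exists M | move=> l; rewrite subrK].
split; first exact: cvg_drift_ratio dev.
split.
  move=> fix0; apply: (orbit_bounded orbit); exists M => l.
  have P0 : P *m Lambda0 = 0 by apply: fix0; rewrite mulmxA QP.
  by have := dev l; rewrite kE P0 dotv0r mulr0 subr0.
move=> [v [Qv xv_neq0]]; split.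
  apply: contraNneq xv_neq0 => xiP0.
  have [_ [_ P_fix]] := P_proj.
  by rewrite -(P_fix v).1 // mulmxA xiP0 mul0mx mxE.
by move=> k_neq0 /(height_bounded orbit); exact: drift_unbounded dev k_neq0.
Qed.
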